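(* Let $(R,\mathfrak m)$ be a one-dimensional Cohen–Macaulay local ring and let $I$ be a regular trace ideal of $R$. Assume there exists $q\in I$ with $I^2=qI$. Then $$\mathcal T(I:I)=\{q^{-1}Y\mid Y\in\mathcal T(R),\ Y\subseteq I\}.$$
   Context: $Q(R)$ is the total ring of fractions and $I:I=\{x\in Q(R)\mid xI\subseteq I\}$. An ideal is regular if it contains a non-zerodivisor. For a ring $A$, the trace ideal of an $A$-module $M$ is $\sum_{f\in\mathrm{Hom}_A(M,A)}\mathrm{Im}f$, and $\mathcal T(A)$ is the set of regular trace ideals of $A$. *)

From Stdlib Require Import List.
From mathcomp Require Import all_boot all_order all_algebra.
Set Implicit Arguments. Unset Strict Implicit. Unset Printing Implicit Defensive.
Import GRing.Theory.
Local Open Scope ring_scope.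

Section Ideals.
Variable R : comNzRingType.

Definition is_ideal (I : R -> Prop) : Prop :=
  I 0 /\ (forall x y, I x -> I y -> I (x + y)) /\ (forall a x, I x -> I (a * x)).

Definition subset_of (I J : R -> Prop) : Prop := forall x, I x -> J x.

Definition proper_ideal (I : R -> Prop) : Prop := is_ideal I /\ ~ I 1.

Definition prime_ideal (P : R -> Prop) : Prop :=
  proper_ideal P /\ forall a b, P (a * b) -> P a \/ P b.

Definition maximal_ideal (M : R -> Prop) : Prop :=
  proper_ideal M /\
  forall J, proper_ideal J -> subset_of M J -> subset_of J M.

Definition local_ring_with (m : R -> Prop) : Prop :=
  maximal_ideal m /\ forall m', maximal_ideal m' -> forall x, m' x <-> m x.

Definition gen_by (s : seq R) (x : R) : Prop :=
  exists c : nat -> R, x = \sum_(i < size s) c i * s`_i.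

Definition noetherian : Prop :=
  forall I, is_ideal I -> exists s : seq R, forall x, I x <-> gen_by s x.

Definition strict_subset (I J : R -> Prop) : Prop :=
  subset_of I J /\ exists x, J x /\ ~ I x.

Definition prime_chain (n : nat) (P : nat -> R -> Prop) : Prop :=
  (forall i, (i <= n)%N -> prime_ideal (P i)) /\
  (forall i, (i < n)%N -> strict_subset (P i) (P i.+1)).

Definition krull_dim (d : nat) : Prop :=
  (exists P, prime_chain d P) /\ ~ (exists P, prime_chain d.+1 P).

Definition regular_seq (s : seq R) : Prop :=
  (forall i, (i < size s)%N -> forall y,
      gen_by (take i s) (s`_i * y) -> gen_by (take i s) y) /\
  ~ gen_by s 1.

Definition depth (m : R -> Prop) (d : nat) : Prop :=
  (exists s, size s = d /\ (forall x, x \in s -> m x) /\ regular_seq s) /\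
  (forall s, (forall x, x \in s -> m x) -> regular_seq s -> (size s <= d)%N).

Definition one_dim_CM_local (m : R -> Prop) : Prop :=
  noetherian /\ local_ring_with m /\ krull_dim 1 /\ depth m 1.

Definition nonzerodivisor (x : R) : Prop := forall y, x * y = 0 -> y = 0.

Definition regular_ideal (I : R -> Prop) : Prop :=
  exists x, I x /\ nonzerodivisor x.

Definition ideal_sq (I : R -> Prop) (x : R) : Prop :=
  exists s : seq (R * R), (forall p, List.In p s -> I p.1 /\ I p.2) /\
    x = \sum_(p <- s) p.1 * p.2.

Definition ideal_scale (q : R) (I : R -> Prop) (x : R) : Prop :=
  exists y, I y /\ x = q * y.

Definition is_hom (M : lmodType R) (f : M -> R) : Prop :=
  forall a (x y : M), f (a *: x + y) = a * f x + f y.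

Definition trace_of (M : lmodType R) (x : R) : Prop :=
  exists s : seq ((M -> R) * M), (forall p, List.In p s -> is_hom p.1) /\
    x = \sum_(p <- s) p.1 p.2.

Definition is_trace_ideal (X : R -> Prop) : Prop :=
  exists M : lmodType R, forall x, X x <-> trace_of M x.

Definition in_T (X : R -> Prop) : Prop := is_trace_ideal X /\ regular_ideal X.

End Ideals.

Definition total_ring_of_fractions (R : comNzRingType) (Q : comUnitRingType)
    (iota : R -> Q) : Prop :=
  injective iota /\
  (forall s, nonzerodivisor s -> iota s \is a GRing.unit) /\
  (forall z, exists a s, nonzerodivisor s /\ z = iota a / iota s).

Definition colon_self (R : comNzRingType) (Q : comUnitRingType)
    (iota : R -> Q) (I : R -> Prop) (z : Q) : Prop :=
  forall y, I y -> exists y', I y' /\ z * iota y = iota y'.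

Set Warnings "-notation-overridden,-ambiguous-paths,-redundant-canonical-projection".
From HB Require Import structures.
From mathcomp Require Import all_boot all_order all_algebra.
From mathcomp Require Import boolp ring.
Set Implicit Arguments. Unset Strict Implicit. Unset Printing Implicit Defensive.
Import GRing.Theory.
Local Open Scope ring_scope.

(* A regular ideal X is a trace ideal iff every z in Q(R) with zX in R already
   has zX in X.  Since I^2 = qI with I regular, q is a nonzerodivisor and
   I:I = q^-1 I; hence Q(R) is also the total ring of fractions of I:I, and the
   criterion can be transported along X |-> qX.  Trace ideals Y of R inside I
   are I:I-modules: (I:I)Y lies in I, hence in R, so the criterion puts it
   back in Y.  Conversely, if zqX is in R
   then zqX is in I: for y in qX, w = zy/q satisfies wI in R because (qX)I is
   in qX, and I is itself a trace ideal. *)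

Section NonZeroDivisors.
Variable S : comNzRingType.
Implicit Types a b u v : S.

Lemma nzd_mulI b u v : nonzerodivisor b -> b * u = b * v -> u = v.
Proof.
move=> nzb buv; apply/eqP; rewrite -subr_eq0; apply/eqP/nzb.
by rewrite mulrBr buv subrr.
Qed.

Lemma nzd_mul a b : nonzerodivisor a -> nonzerodivisor b -> nonzerodivisor (a * b).
Proof. by move=> nza nzb u; rewrite -mulrA => /nza /nzb. Qed.

Lemma nzd_mull a b : nonzerodivisor (a * b) -> nonzerodivisor a.
Proof. by move=> nzab u au0; apply: nzab; rewrite mulrAC au0 mul0r. Qed.

End NonZeroDivisors.

Section TraceIdeals.
Variables (S : comNzRingType) (M : lmodType S).

Lemma is_hom0 (f : M -> S) : is_hom f -> f 0 = 0.
Proof.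
move=> hf; have := hf 1 0 0; rewrite scaler0 addr0 mul1r.
by rewrite -{1}(addr0 (f 0)) => /addrI.
Qed.

Lemma is_homZ (f : M -> S) a m : is_hom f -> f (a *: m) = a * f m.
Proof. by move=> hf; have := hf a m 0; rewrite addr0 is_hom0 // addr0. Qed.

Lemma trace_of0 : trace_of M 0.
Proof. by exists [::]; rewrite big_nil. Qed.

Lemma trace_of_cons (f : M -> S) m t :
  is_hom f -> trace_of M t -> trace_of M (f m + t).
Proof.
move=> hf [s [hs ->]]; exists ((f, m) :: s); rewrite big_cons; split=> //.
by move=> p /= [<- | /hs].
Qed.

Lemma trace_of_hom (f : M -> S) m : is_hom f -> trace_of M (f m).
Proof. by move=> hf; rewrite -[f m]addr0; apply: trace_of_cons trace_of0. Qed.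

Lemma trace_of_ind (P : S -> Prop) :
  P 0 -> (forall (f : M -> S) m t, is_hom f -> P t -> P (f m + t)) ->
  forall x, trace_of M x -> P x.
Proof.
move=> P0 Pcons x [s [+ ->]]; elim: s => [|p s IHs] hs; first by rewrite big_nil.
rewrite big_cons; apply: Pcons; first by apply: hs; left.
by apply: IHs => p' ?; apply: hs; right.
Qed.

Lemma trace_of_ideal : is_ideal (trace_of M).
Proof.
split; first exact: trace_of0.
split=> [x y + Ty | a x].
  elim/trace_of_ind => [|f m t hf IHt]; first by rewrite add0r.
  by rewrite -addrA; apply: trace_of_cons.
elim/trace_of_ind => [|f m t hf IHt]; first by rewrite mulr0; apply: trace_of0.
by rewrite mulrDr -is_homZ //; apply: trace_of_cons.
Qed.

(* In Q(R): every fraction a/b with (a/b)X in R has (a/b)X in X, i.e.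
   R:X = X:X. *)
Definition colon_closed (X : S -> Prop) : Prop :=
  forall a b, nonzerodivisor b -> (forall x, X x -> exists r, a * x = b * r) ->
  forall x, X x -> exists r, X r /\ a * x = b * r.

Lemma hom_divr (f : M -> S) a b : nonzerodivisor b -> is_hom f ->
  (forall m, exists r, a * f m = b * r) ->
  exists g : M -> S, is_hom g /\ forall m, a * f m = b * g m.
Proof.
move=> nzb hf /choice [g hg]; exists g; split=> // k m m'.
by apply: (nzd_mulI nzb); rewrite -hg hf !mulrDr !(mulrCA _ k) -!hg.
Qed.

Lemma trace_of_colon_closed : colon_closed (trace_of M).
Proof.
move=> a b nzb hab x; elim/trace_of_ind => [|f m t hf [r [Tr ear]]].
  by exists 0; split; [apply: trace_of0 | rewrite !mulr0].
have [g [hg afg]] := hom_divr nzb hf (fun m => hab _ (trace_of_hom m hf)).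
exists (g m + r); split; first exact: trace_of_cons.
by rewrite !mulrDr afg ear.
Qed.

End TraceIdeals.

(* The guard [is_ideal X ->] makes the carrier closed under the module
   operations for every X, so the instances need no hypothesis; when X is an
   ideal, the carrier is exactly X. *)
Definition ideal_guard (S : comNzRingType) (X : S -> Prop) (x : S) : Prop :=
  is_ideal X -> X x.

Definition ideal_mod (S : comNzRingType) (X : S -> Prop) := {x | ideal_guard X x}.

HB.instance Definition _ (S : comNzRingType) (X : S -> Prop) :=
  gen_eqMixin (ideal_mod X).
HB.instance Definition _ (S : comNzRingType) (X : S -> Prop) :=
  gen_choiceMixin (ideal_mod X).

Section IdealModule.
Variables (S : comNzRingType) (X : S -> Prop).
Implicit Types u v w : ideal_mod X.

Lemma ideal_mod_inj : injective (@sval S _ : ideal_mod X -> S).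
Proof. by move=> [x hx] [y hy] /= exy; apply: eq_exist. Qed.

Definition ideal_mod0 : ideal_mod X := exist (ideal_guard X) 0 (fun idX => idX.1).

Definition ideal_mod_add u v : ideal_mod X :=
  exist (ideal_guard X) (sval u + sval v)
    (fun idX => idX.2.1 _ _ (svalP u idX) (svalP v idX)).

Definition ideal_mod_scale a u : ideal_mod X :=
  exist (ideal_guard X) (a * sval u) (fun idX => idX.2.2 a _ (svalP u idX)).

Definition ideal_mod_opp u : ideal_mod X := ideal_mod_scale (-1) u.

Lemma ideal_mod_addA : associative ideal_mod_add.
Proof. by move=> u v w; apply: ideal_mod_inj; rewrite /= addrA. Qed.
Lemma ideal_mod_addC : commutative ideal_mod_add.
Proof. by move=> u v; apply: ideal_mod_inj; rewrite /= addrC. Qed.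
Lemma ideal_mod_add0 : left_id ideal_mod0 ideal_mod_add.
Proof. by move=> u; apply: ideal_mod_inj; rewrite /= add0r. Qed.
Lemma ideal_mod_addN : left_inverse ideal_mod0 ideal_mod_opp ideal_mod_add.
Proof. by move=> u; apply: ideal_mod_inj; rewrite /= mulN1r addNr. Qed.

HB.instance Definition _ := GRing.isZmodule.Build (ideal_mod X)
  ideal_mod_addA ideal_mod_addC ideal_mod_add0 ideal_mod_addN.

Lemma ideal_mod_scaleA a b u :
  ideal_mod_scale a (ideal_mod_scale b u) = ideal_mod_scale (a * b) u.
Proof. by apply: ideal_mod_inj; rewrite /= mulrA. Qed.
Lemma ideal_mod_scale1 : left_id 1 ideal_mod_scale.
Proof. by move=> u; apply: ideal_mod_inj; rewrite /= mul1r. Qed.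
Lemma ideal_mod_scaleDr : right_distributive ideal_mod_scale ideal_mod_add.
Proof. by move=> a u v; apply: ideal_mod_inj; rewrite /= mulrDr. Qed.
Lemma ideal_mod_scaleDl u :
  {morph ideal_mod_scale^~ u : a b / a + b >-> ideal_mod_add a b}.
Proof. by move=> a b; apply: ideal_mod_inj; rewrite /= mulrDl. Qed.

HB.instance Definition _ := GRing.Zmodule_isLmodule.Build S (ideal_mod X)
  ideal_mod_scaleA ideal_mod_scale1 ideal_mod_scaleDr ideal_mod_scaleDl.

End IdealModule.

Section TraceCriterion.
Variable S : comNzRingType.

Definition ideal_elt (X : S -> Prop) x (Xx : X x) : ideal_mod X :=
  exist (ideal_guard X) x (fun=> Xx).

Lemma ideal_mod_hom_in (X : S -> Prop) x0 (f : ideal_mod X -> S) u :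
  is_ideal X -> X x0 -> nonzerodivisor x0 -> colon_closed X -> is_hom f ->
  X (f u).
Proof.
move=> idX Xx0 nzx0 ccX hf; set u0 := ideal_elt Xx0.
have fu0 v : x0 * f v = sval v * f u0.
  by rewrite -!is_homZ //; congr f; apply: ideal_mod_inj; rewrite /= mulrC.
have [|r [Xr fu0u]] := ccX (f u0) x0 nzx0 _ (sval u) (svalP u idX).
  by move=> x Xx; exists (f (ideal_elt Xx)); rewrite fu0 mulrC.
suff -> : f u = r by [].
by apply: (nzd_mulI nzx0); rewrite fu0 mulrC.
Qed.

Lemma trace_of_ideal_mod (X : S -> Prop) :
  is_ideal X -> regular_ideal X -> colon_closed X ->
  forall x, X x <-> trace_of (ideal_mod X) x.
Proof.
move=> idX [x0 [Xx0 nzx0]] ccX x; split=> [Xx | ].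
  exact: (@trace_of_hom _ (ideal_mod X) sval (ideal_elt Xx)).
elim/trace_of_ind => [|f u t hf Xt]; first exact: idX.1.
by apply: idX.2.1 => //; apply: ideal_mod_hom_in Xx0 nzx0 ccX hf.
Qed.

Lemma in_TP (X : S -> Prop) :
  in_T X <-> [/\ is_ideal X, regular_ideal X & colon_closed X].
Proof.
split=> [[[M XM] regX] | [idX regX ccX]]; last first.
  by split=> //; exists (ideal_mod X); apply: trace_of_ideal_mod.
have eX : X = trace_of M by apply/funext => x; apply/propext.
by subst X; split; [apply: trace_of_ideal | | apply: trace_of_colon_closed].
Qed.

End TraceCriterion.

Definition mul_into (S : comNzRingType) (Q : comUnitRingType) (f : S -> Q)
    (z : Q) (X Y : S -> Prop) : Prop :=
  forall x, X x -> exists y, Y y /\ z * f x = f y.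

Definition frac_stable (S : comNzRingType) (Q : comUnitRingType) (f : S -> Q)
    (X : S -> Prop) : Prop :=
  forall z, mul_into f z X (fun=> True) -> mul_into f z X X.

Section Fractions.
Variables (S : comNzRingType) (Q : comUnitRingType) (f : {rmorphism S -> Q}).
Hypothesis fracS : total_ring_of_fractions f.

Lemma nzd_unit b : nonzerodivisor b -> f b \is a GRing.unit.
Proof. exact: fracS.2.1. Qed.

Lemma mul_frac_eq a b x r :
  nonzerodivisor b -> f a / f b * f x = f r <-> a * x = b * r.
Proof.
move=> /nzd_unit ub; split=> [e | e].
  by apply: fracS.1; rewrite !rmorphM -e mulrCA mulrA divrK.
by rewrite mulrAC -rmorphM e rmorphM mulrAC divrr // mul1r.
Qed.

Lemma colon_closedE X : colon_closed X <-> frac_stable f X.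
Proof.
split=> [ccX z | stX a b nzb hab x Xx].
  have [a [b [nzb ->]]] := fracS.2.2 z; move=> hz x Xx.
  have [|r [Xr e]] := ccX a b nzb _ x Xx.
    by move=> y /hz [r [_ e]]; exists r; apply/(mul_frac_eq a y r nzb).
  by exists r; split=> //; apply/(mul_frac_eq a x r nzb).
have [|r [Xr e]] := stX (f a / f b) _ x Xx.
  by move=> y /hab [r e]; exists r; split=> //; apply/(mul_frac_eq a y r nzb).
by exists r; split=> //; apply/(mul_frac_eq a x r nzb).
Qed.

Lemma in_T_frac X :
  in_T X <-> [/\ is_ideal X, regular_ideal X & frac_stable f X].
Proof.
split=> [/in_TP [idX regX /colon_closedE stX] // | [idX regX /colon_closedE ccX]].
exact/in_TP.
Qed.

Lemma mul_into_absorb (I Y : S -> Prop) q z :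
  frac_stable f I -> I q -> nonzerodivisor q ->
  (forall y y', Y y -> I y' -> exists y'', Y y'' /\ y * y' = q * y'') ->
  mul_into f z Y (fun=> True) -> mul_into f z Y I.
Proof.
move=> stI Iq /nzd_unit uq YI hz y Yy; have [r [_ ezy]] := hz y Yy.
have [|r' [Ir' e']] := stI (f r / f q) _ q Iq; last first.
  by exists r'; rewrite ezy -e' divrK.
move=> y' Iy'; have [y'' [Yy'' eyy]] := YI y y' Yy Iy'.
have [r'' [_ e'']] := hz y'' Yy''; exists r''; split=> //.
rewrite -ezy -e''; transitivity (z * (f q)^-1 * f (y * y')).
  by rewrite rmorphM; ring.
by rewrite eyy rmorphM mulrA divrK.
Qed.

End Fractions.

Section Correspondence.
Variables (R : comNzRingType) (Q : comUnitRingType) (iota : {rmorphism R -> Q}).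
Variables (A : comNzRingType) (j : {rmorphism A -> Q}).
Variables (I : R -> Prop) (q : R).
Hypothesis fracR : total_ring_of_fractions iota.
Hypothesis j_inj : injective j.
Hypothesis imj : forall z, colon_self iota I z <-> exists a, j a = z.
Hypotheses (idI : is_ideal I) (regI : regular_ideal I) (stI : frac_stable iota I).
Hypothesis Iq : I q.
Hypothesis sqI : forall y y', I y -> I y' -> ideal_scale q I (y * y').

Local Notation iq := (iota q).

Lemma nzd_q : nonzerodivisor q.
Proof.
have [x0 [Ix0 nzx0]] := regI; have [s [_ e]] := sqI Ix0 Ix0.
by apply: (@nzd_mull _ _ s); rewrite -e; apply: nzd_mul.
Qed.

Lemma unit_iq : iq \is a GRing.unit.
Proof. exact (nzd_unit fracR nzd_q). Qed.

Definition eq_divq a y := j a = iq^-1 * iota y.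

Lemma eq_divqE a y : eq_divq a y <-> j a * iq = iota y.
Proof.
rewrite /eq_divq; split=> [-> | <-]; first by rewrite mulrAC mulVr ?mul1r // unit_iq.
by rewrite mulrC mulrK // unit_iq.
Qed.

Lemma divq_total a : exists y, I y /\ eq_divq a y.
Proof.
have [y [Iy e]] := (imj (j a)).2 (ex_intro _ a erefl) q Iq.
by exists y; split=> //; apply/eq_divqE.
Qed.

Lemma divq_onto y : I y -> exists a, eq_divq a y.
Proof.
move=> Iy; apply/imj => y' Iy'; have [s [Is e]] := sqI Iy Iy'.
by exists s; split=> //; rewrite -mulrA -rmorphM e rmorphM mulKr // unit_iq.
Qed.

Lemma j_iota r : exists c, j c = iota r.
Proof.
apply/imj => y Iy; exists (r * y); split; last by rewrite rmorphM.
exact: idI.2.2.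
Qed.

Lemma eq_divq0 : eq_divq 0 0.
Proof. by rewrite /eq_divq !rmorph0 mulr0. Qed.

Lemma eq_divqD a a' y y' :
  eq_divq a y -> eq_divq a' y' -> eq_divq (a + a') (y + y').
Proof. by rewrite /eq_divq !rmorphD => -> ->; rewrite mulrDr. Qed.

Lemma eq_divqM c a y y' :
  j c * iota y = iota y' -> eq_divq a y -> eq_divq (c * a) y'.
Proof. by move=> e ea; rewrite /eq_divq rmorphM ea mulrCA e. Qed.

Lemma eq_divq_mul a a' y y' y'' :
  eq_divq a y -> eq_divq a' y' -> eq_divq (a * a') y'' -> y * y' = q * y''.
Proof.
move=> /eq_divqE ea /eq_divqE ea' /eq_divqE ea''; apply: fracR.1.
by rewrite !rmorphM -ea -ea' -ea'' rmorphM; ring.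
Qed.

Lemma eq_divq_mulz z a a' y y' :
  eq_divq a y -> eq_divq a' y' -> z * j a = j a' <-> z * iota y = iota y'.
Proof.
move=> /eq_divqE <- /eq_divqE <-; split=> [e | e]; first by rewrite mulrA e.
by apply: (mulIr unit_iq); rewrite -mulrA.
Qed.

Lemma eq_divq_inj a y y' : eq_divq a y -> eq_divq a y' -> y = y'.
Proof.
move=> ea ea'; have uiq : iq^-1 \is a GRing.unit by rewrite unitrV unit_iq.
by apply: fracR.1; apply: (mulrI uiq); rewrite -ea -ea'.
Qed.

Lemma nzd_eq_divq a y : eq_divq a y -> nonzerodivisor a <-> nonzerodivisor y.
Proof.
move=> ea; split=> [nza r yr0 | nzy c ac0].
  have [c ec] := j_iota r.
  have c0 : c = 0.
    apply: nza; apply: j_inj.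
    by rewrite !rmorphM ea ec -mulrA -rmorphM yr0 !rmorph0 mulr0.
  by apply: fracR.1; rewrite -ec c0 !rmorph0.
have [t [_ ect]] := divq_total c.
have t0 : t = 0.
  apply: nzy; apply: fracR.1; move: ea ect => /eq_divqE ea /eq_divqE ect.
  by rewrite rmorphM -ea -ect mulrACA -rmorphM ac0 !rmorph0 !mul0r.
by apply: j_inj; rewrite ect t0 !rmorph0 mulr0.
Qed.

Lemma frac_j : total_ring_of_fractions j.
Proof.
split=> //; split=> [b nzb | z].
  have [s [_ es]] := divq_total b.
  rewrite es unitrM unitrV unit_iq.
  exact (nzd_unit fracR ((nzd_eq_divq es).1 nzb)).
have [a [b [nzb ->]]] := fracR.2.2 z.
have [[ca eca] [cb ecb]] := (j_iota a, j_iota b).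
exists ca, cb; split; last by rewrite eca ecb.
have ecb' : eq_divq cb (q * b) by rewrite /eq_divq ecb rmorphM mulKr // unit_iq.
by apply/(nzd_eq_divq ecb'); apply: nzd_mul nzd_q nzb.
Qed.

Definition mulq (X : A -> Prop) (y : R) := exists a, X a /\ eq_divq a y.

Definition divq (Y : R -> Prop) (a : A) := exists y, Y y /\ eq_divq a y.

Lemma mulq_sub X : subset_of (mulq X) I.
Proof.
move=> y [a [_ ea]]; have [y' [Iy' ea']] := divq_total a.
by rewrite (eq_divq_inj ea ea').
Qed.

Lemma mulq_ideal X : is_ideal X -> is_ideal (mulq X).
Proof.
move=> [X0 [XD XM]]; split; first by exists 0; split=> //; apply: eq_divq0.
split=> [y y' [a [Xa ea]] [a' [Xa' ea']] | r y [a [Xa ea]]].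
  by exists (a + a'); split; [apply: XD | apply: eq_divqD].
have [c ec] := j_iota r; exists (c * a); split; first exact: XM.
by apply: eq_divqM ea; rewrite ec rmorphM.
Qed.

Lemma mulq_regular X : regular_ideal X -> regular_ideal (mulq X).
Proof.
move=> [a0 [Xa0 nza0]]; have [y0 [_ e0]] := divq_total a0.
by exists y0; split; [exists a0 | apply/(nzd_eq_divq e0)].
Qed.

Lemma mulq_stable X : is_ideal X -> frac_stable j X -> frac_stable iota (mulq X).
Proof.
move=> idX stX z hz.
have hzI : mul_into iota z (mulq X) I.
  apply: (mul_into_absorb fracR stI Iq nzd_q _ hz).
  move=> y y' [a [Xa ea]] Iy'; have [c ec] := divq_onto Iy'.
  have [y'' [_ e'']] := divq_total (a * c); exists y''; split.
    by exists (a * c); split=> //; rewrite mulrC; apply: idX.2.2.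
  exact: eq_divq_mul ea ec e''.
have hzX : mul_into j z X (fun=> True).
  move=> a Xa; have [y [_ ea]] := divq_total a.
  have [r [Ir ezr]] := hzI y (ex_intro _ a (conj Xa ea)).
  have [c ec] := divq_onto Ir.
  by exists c; split=> //; apply/(eq_divq_mulz z ea ec).
move=> y [a [Xa ea]]; have [a' [Xa' eza]] := stX z hzX a Xa.
have [y' [_ ea']] := divq_total a'.
by exists y'; split; [exists a' | apply/(eq_divq_mulz z ea ea')].
Qed.

Lemma in_T_mulq X : in_T X -> in_T (mulq X).
Proof.
move=> /(in_T_frac frac_j) [idX regX stX]; apply/(in_T_frac fracR).
by split; [apply: mulq_ideal | apply: mulq_regular | apply: mulq_stable].
Qed.

Lemma mulq_image X z :
  (exists a, X a /\ j a = z) <-> (exists y, mulq X y /\ z = iq^-1 * iota y).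
Proof.
split=> [[a [Xa <-]] | [y [[a [Xa ea]] ->]]]; last by exists a.
by have [y [_ ea]] := divq_total a; exists y; split=> //; exists a.
Qed.

Section IdealsInsideI.
Variable Y : R -> Prop.
Hypothesis YI : subset_of Y I.

Lemma divq_ideal : is_ideal Y -> frac_stable iota Y -> is_ideal (divq Y).
Proof.
move=> [Y0 [YD YM]] stY; split; first by exists 0; split=> //; apply: eq_divq0.
split=> [a a' [y [Yy ea]] [y' [Yy' ea']] | c a [y [Yy ea]]].
  by exists (y + y'); split; [apply: YD | apply: eq_divqD].
have [|y' [Yy' e']] := stY (j c) _ y Yy.
  move=> y1 Yy1; have [y2 [_ e2]] := (imj (j c)).2 (ex_intro _ c erefl) y1 (YI Yy1).
  by exists y2.
by exists y'; split=> //; apply: eq_divqM e' ea.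
Qed.

Lemma divq_regular : regular_ideal Y -> regular_ideal (divq Y).
Proof.
move=> [y0 [Yy0 nzy0]]; have [a0 e0] := divq_onto (YI Yy0).
by exists a0; split; [exists y0 | apply/(nzd_eq_divq e0)].
Qed.

Lemma divq_stable : frac_stable iota Y -> frac_stable j (divq Y).
Proof.
move=> stY z hz.
have hzY : mul_into iota z Y (fun=> True).
  move=> y Yy; have [a ea] := divq_onto (YI Yy).
  have [c [_ ec]] := hz a (ex_intro _ y (conj Yy ea)).
  have [y' [_ ec']] := divq_total c.
  by exists y'; split=> //; apply/(eq_divq_mulz z ea ec').
move=> a [y [Yy ea]]; have [y' [Yy' ezy]] := stY z hzY y Yy.
have [a' ea'] := divq_onto (YI Yy').
by exists a'; split; [exists y' | apply/(eq_divq_mulz z ea ea')].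
Qed.

Lemma in_T_divq : in_T Y -> in_T (divq Y).
Proof.
move=> /(in_T_frac fracR) [idY regY stY]; apply/(in_T_frac frac_j).
by split; [apply: divq_ideal | apply: divq_regular | apply: divq_stable].
Qed.

Lemma divq_image z :
  (exists a, divq Y a /\ j a = z) <-> (exists y, Y y /\ z = iq^-1 * iota y).
Proof.
split=> [[a [[y [Yy ea]] <-]] | [y [Yy ->]]]; first by exists y.
by have [a ea] := divq_onto (YI Yy); exists a; split; [exists y |].
Qed.

End IdealsInsideI.

Lemma trace_ideals_colon :
  (forall X : A -> Prop, in_T X ->
     exists Y : R -> Prop, in_T Y /\ subset_of Y I /\
       forall z : Q, (exists a, X a /\ j a = z) <->
                     (exists y, Y y /\ z = iq^-1 * iota y)) /\
  (forall Y : R -> Prop, in_T Y -> subset_of Y I ->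
     exists X : A -> Prop, in_T X /\
       forall z : Q, (exists a, X a /\ j a = z) <->
                     (exists y, Y y /\ z = iq^-1 * iota y)).
Proof.
split=> [X TX | Y TY YI].
  exists (mulq X); split; first exact: in_T_mulq.
  by split; [apply: mulq_sub | apply: mulq_image].
by exists (divq Y); split; [apply: in_T_divq | apply: divq_image].
Qed.

End Correspondence.

Theorem corollary2p6
  (R : comNzRingType) (m : R -> Prop) (I : R -> Prop) (q : R)
  (Q : comUnitRingType) (iota : {rmorphism R -> Q})
  (A : comNzRingType) (j : {rmorphism A -> Q}) :
  one_dim_CM_local m ->
  in_T I ->
  I q ->
  (forall x, ideal_sq I x <-> ideal_scale q I x) ->
  total_ring_of_fractions iota ->
  injective j ->
  (forall z, colon_self iota I z <-> exists a, j a = z) ->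
  (forall X : A -> Prop, in_T X ->
     exists Y : R -> Prop, in_T Y /\ subset_of Y I /\
       forall z : Q, (exists a, X a /\ j a = z) <->
                     (exists y, Y y /\ z = (iota q)^-1 * iota y)) /\
  (forall Y : R -> Prop, in_T Y -> subset_of Y I ->
     exists X : A -> Prop, in_T X /\
       forall z : Q, (exists a, X a /\ j a = z) <->
                     (exists y, Y y /\ z = (iota q)^-1 * iota y)).
Proof.
move=> _ TI Iq sqE fracR j_inj imj.
have [idI regI stI] := (in_T_frac fracR I).1 TI.
apply: trace_ideals_colon fracR j_inj imj idI regI stI Iq _ => y y' Iy Iy'.
apply/sqE; exists [:: (y, y')]; rewrite big_seq1.
by split=> // p [<- | []].
Qed.
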